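(* There are infinitely many SP twins, i.e. infinitely many natural numbers $m$ such that both $m$ and $m+1$ are SP numbers.
   Context: A Square-Prime (SP) number is a positive integer of the form $p a^2$ where $p$ is a prime and $a \ge 2$ is a natural number (i.e. $a \neq 1$). An SP twin is a pair of consecutive natural numbers $m, m+1$ that are both SP numbers (e.g. $27 = 3\cdot 9$ and $28 = 7 \cdot 4$). *)

From mathcomp Require Import all_boot.
Set Implicit Arguments. Unset Strict Implicit. Unset Printing Implicit Defensive.

Definition SP (n : nat) : Prop :=
  exists p a : nat, prime p /\ 2 <= a /\ n = p * a ^ 2.

Definition SP_twin (m : nat) : Prop := SP m /\ SP m.+1.

(* The pairs 3x^2, 7y^2 with 7y^2 - 3x^2 = 1 are SP twins.  This generalised Pell
   equation has the solution (x, y) = (3, 2), and multiplying y√7 + x√3 by the unit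
   55 + 12√21 of Z[√21] maps solutions to strictly larger ones. *)
From mathcomp Require Import all_boot zify.

Lemma SP_prime_mul_sqr p a : prime p -> 2 <= a -> SP (p * a ^ 2).
Proof. by move=> p_pr a_ge2; exists p, a. Qed.

Definition twin_pell (x y : nat) : Prop := 7 * y ^ 2 = 3 * x ^ 2 + 1.

Lemma twin_pell_step x y : twin_pell x y ->
  twin_pell (55 * x + 84 * y) (36 * x + 55 * y).
Proof. by rewrite /twin_pell; nia. Qed.

Lemma twin_pell_unbounded n : exists x y, n <= x /\ twin_pell x y.
Proof.
elim: n => [|n [x [y [le_nx sol_xy]]]]; first by exists 3, 2.
have y_gt0 : 0 < y by move: sol_xy; rewrite /twin_pell; nia.
exists (55 * x + 84 * y), (36 * x + 55 * y).
by split; [lia | exact: twin_pell_step].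
Qed.

Lemma SP_twin_of_twin_pell x y : 2 <= x -> twin_pell x y -> SP_twin (3 * x ^ 2).
Proof.
move=> x_ge2 sol_xy; have y_ge2 : 2 <= y by move: sol_xy; rewrite /twin_pell; nia.
split; first exact: SP_prime_mul_sqr.
by rewrite -addn1 -sol_xy; apply: SP_prime_mul_sqr.
Qed.

Theorem mainTheorem4 : forall N : nat, exists m : nat, N <= m /\ SP_twin m.
Proof.
move=> N; have [x [y [le_x sol_xy]]] := twin_pell_unbounded (maxn N 2).
exists (3 * x ^ 2); split; first nia.
by apply: SP_twin_of_twin_pell sol_xy; lia.
Qed.
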